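(* Let $X$ be a metric space and $v\in X$ a point such that $\mathscr C(v)$ is finite, and let $A_v:=A(d_v)$. Then: (1) every $A\in\mathscr A(X)$ with $A\subset A_v$ satisfies $\mathrm{rk}(A)\le\frac12|\mathscr C(v)|$; (2) there are at most $2^{|\mathscr C(v)|-1}-1$ sets $A\in\mathscr A(X)$ with $A\subset A_v$ and $\mathrm{rk}(A)=1$.
   Context: $d_v=d(\cdot,v)$. $I(x,y)=\{u: d(x,u)+d(u,y)=d(x,y)\}$, $C(x,v)=\{y: v\in I(x,y)\}$, and $\mathscr C(v)=\{C(x,v): x\in X\}$. For $f\colon X\to\mathbb R$, $A(f)$ is the set of unordered pairs $\{x,y\}$ ($x=y$ allowed) with $f(x)+f(y)=d(x,y)$; $\Delta(X)=\{f: f(x)+f(y)\ge d(x,y)\ \forall x,y\}$; $\mathscr A(X)=\{A(f): f\in\Delta(X),\ \bigcup A(f)=X\}$; $\mathrm{rk}(A)=\dim\{g\in\mathbb R^X: g(x)+g(y)=d(x,y)\ \forall\{x,y\}\in A\}$. *)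

From Stdlib Require Import Reals List Arith.
Open Scope R_scope.

Definition is_metric {X : Type} (d : X -> X -> R) : Prop :=
  (forall x y, d x y = 0 <-> x = y) /\
  (forall x y, d x y = d y x) /\
  (forall x y z, d x z <= d x y + d y z).

Definition interval {X : Type} (d : X -> X -> R) (x y : X) : X -> Prop :=
  fun u => d x u + d u y = d x y.

Definition Cset {X : Type} (d : X -> X -> R) (x v : X) : X -> Prop :=
  fun y => interval d x y v.

(* A set of unordered pairs {x,y} (x = y allowed) over X is represented by a
   symmetric relation: A x y <-> {x,y} in A. *)
Definition pairset (X : Type) := X -> X -> Prop.

Definition Aof {X : Type} (d : X -> X -> R) (f : X -> R) : pairset X :=
  fun x y => f x + f y = d x y.

Definition in_Delta {X : Type} (d : X -> X -> R) (f : X -> R) : Prop :=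
  forall x y, f x + f y >= d x y.

Definition in_scriptA {X : Type} (d : X -> X -> R) (A : pairset X) : Prop :=
  exists f, in_Delta d f /\ A = Aof d f /\ (forall x, exists y, Aof d f x y).

Definition pair_subset {X : Type} (A B : pairset X) : Prop :=
  forall x y, A x y -> B x y.

Fixpoint lincomb {X : Type} (n : nat) (c : nat -> R) (b : nat -> X -> R) (x : X) : R :=
  match n with
  | O => 0
  | S k => lincomb k c b x + c k * b k x
  end.

Definition solset {X : Type} (d : X -> X -> R) (A : pairset X) : (X -> R) -> Prop :=
  fun g => forall x y, A x y -> g x + g y = d x y.

Definition affine_dim {X : Type} (S : (X -> R) -> Prop) (n : nat) : Prop :=
  exists (g0 : X -> R) (b : nat -> X -> R),
    (forall c : nat -> R, (forall x, lincomb n c b x = 0) ->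
        forall i, (i < n)%nat -> c i = 0) /\
    (forall g, S g <-> exists c : nat -> R, forall x, g x = g0 x + lincomb n c b x).

Definition rk_eq {X : Type} (d : X -> X -> R) (A : pairset X) (n : nat) : Prop :=
  affine_dim (solset d A) n.

Definition scriptC_card {X : Type} (d : X -> X -> R) (v : X) (m : nat) : Prop :=
  exists l : list (X -> Prop), NoDup l /\ length l = m /\
    (forall S, In S l <-> exists x, S = Cset d x v).

From Stdlib Require Import Reals List Arith Bool Lra Lia Classical ClassicalEpsilon FunctionalExtensionality PropExtensionality.
Open Scope R_scope.

(* Write [h = f - d_v] for a solution [f] with [A(f) ⊆ A_v].  A pair {x,y} lies
   in [A(f)] iff it is [d_v]-geodesic and [h x + h y = 0], and [h], like every
   homogeneous solution, is constant on each class [C(x,v)].  Every class is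
   linked by [A(f)] to some class, so (Ore) some dominating set contains at most
   half of the classes; homogeneous solutions are determined by their values on
   it, which bounds the rank.  In rank one [h] is proportional to each of its
   level cuts, so it takes only the values [0, s, -s]; [A(f)] is then determined
   by the nonempty set of classes where [h < 0], which omits [C(v,v)] because
   [h v >= 0]. *)

Definition upd {T : Type} (b : nat -> T) (n : nat) (w : T) : nat -> T :=
  fun i => if Nat.eqb i n then w else b i.

Lemma lincomb_ext {X : Type} n c1 c2 (b1 b2 : nat -> X -> R) x :
  (forall i, (i < n)%nat -> c1 i * b1 i x = c2 i * b2 i x) ->
  lincomb n c1 b1 x = lincomb n c2 b2 x.
Proof.
  induction n as [|n IH]; simpl; intros H; [reflexivity|].
  rewrite IH, (H n) by (lia || (intros; apply H; lia)). reflexivity.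
Qed.

Lemma upd_lt {T : Type} (b : nat -> T) n w i : (i < n)%nat -> upd b n w i = b i.
Proof. intros Hi. unfold upd. replace (Nat.eqb i n) with false; [reflexivity|]. symmetry; apply Nat.eqb_neq; lia. Qed.

Lemma lincomb_upd {X : Type} n c (b : nat -> X -> R) w x :
  lincomb (S n) c (upd b n w) x = lincomb n c b x + c n * w x.
Proof.
  simpl. unfold upd at 2. rewrite Nat.eqb_refl. f_equal.
  apply lincomb_ext. intros i Hi. rewrite upd_lt by exact Hi. reflexivity.
Qed.

Lemma lincomb_upd_coef {X : Type} n c a (b : nat -> X -> R) x :
  lincomb n (upd c n a) b x = lincomb n c b x.
Proof. apply lincomb_ext. intros i Hi. rewrite upd_lt by exact Hi. reflexivity. Qed.

Definition is_subspace {X : Type} (V : (X -> R) -> Prop) : Prop :=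
  V (fun _ => 0) /\ (forall g k, V g -> V k -> V (fun x => g x + k x)) /\
  (forall a g, V g -> V (fun x => a * g x)).

Definition lin_independent {X : Type} (n : nat) (b : nat -> X -> R) : Prop :=
  forall c : nat -> R, (forall x, lincomb n c b x = 0) -> forall i, (i < n)%nat -> c i = 0.

Definition spans {X : Type} (n : nat) (b : nat -> X -> R) (V : (X -> R) -> Prop) : Prop :=
  forall g, V g <-> exists c, forall x, g x = lincomb n c b x.

Lemma subspace_vanishing_at {X : Type} (V : (X -> R) -> Prop) (t : X) :
  is_subspace V -> is_subspace (fun k => V k /\ k t = 0).
Proof.
  intros (V0 & Vadd & Vscale). split; [|split].
  - split; [exact V0 | reflexivity].
  - intros g k [Vg gt] [Vk kt]. split; [apply Vadd; assumption | lra].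
  - intros a g [Vg gt]. split; [apply Vscale; assumption | rewrite gt; ring].
Qed.

(* Induct on [ts], splitting off the direction of a vector that does not vanish
   at the head point. *)
Lemma subspace_basis {X : Type} (ts : list X) :
  forall V : (X -> R) -> Prop, is_subspace V ->
  (forall k, V k -> (forall t, In t ts -> k t = 0) -> forall x, k x = 0) ->
  exists n b, (n <= length ts)%nat /\ lin_independent n b /\ spans n b V.
Proof.
  induction ts as [|t ts IH]; intros V HV Hdet.
  - exists 0%nat, (fun _ _ => 0). split; [simpl; lia|]. split; [intros c _ i Hi; lia|].
    intros g; split.
    + intros Vg. exists (fun _ => 0). intros x. simpl. apply (Hdet g Vg). intros t [].
    + intros [c Hc]. replace g with (fun _ : X => 0) by (apply functional_extensionality;
        intros x; rewrite Hc; reflexivity). apply HV.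
  - pose proof HV as (V0 & Vadd & Vscale).
    destruct (IH _ (subspace_vanishing_at V t HV)) as (n & b & Hn & Hind & Hspan).
    { intros k [Vk kt] Hk x. apply (Hdet k Vk). intros t' [<-|Ht']; auto. }
    assert (Vspan : forall c, V (lincomb n c b) /\ lincomb n c b t = 0)
      by (intros c; apply Hspan; exists c; reflexivity).
    destruct (classic (exists w, V w /\ w t <> 0)) as [[w [Vw wt]]|Hno].
    + set (w1 := fun x => / w t * w x).
      assert (Vw1 : V w1) by (apply Vscale, Vw).
      assert (w1t : w1 t = 1) by (unfold w1; field; exact wt).
      exists (S n), (upd b n w1). split; [simpl; lia|]. split.
      * intros c Hc.
        assert (cn : c n = 0).
        { specialize (Hc t). rewrite lincomb_upd, (proj2 (Vspan c)), w1t in Hc. lra. }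
        intros i Hi. destruct (Nat.eq_dec i n) as [->|Hne]; [exact cn|].
        apply Hind; [|lia]. intros x. specialize (Hc x). rewrite lincomb_upd, cn in Hc. lra.
      * intros g; split.
        -- intros Vg.
           destruct (proj1 (Hspan (fun x => g x + - g t * w1 x))) as [c Hc].
           { split; [apply Vadd, Vscale; assumption|]. rewrite w1t; ring. }
           exists (upd c n (g t)). intros x.
           rewrite lincomb_upd, lincomb_upd_coef, <- Hc. unfold upd. rewrite Nat.eqb_refl. ring.
        -- intros [c Hc]. replace g with (fun x => lincomb n c b x + c n * w1 x).
           ++ apply Vadd; [apply Vspan | apply Vscale, Vw1].
           ++ apply functional_extensionality; intros x. rewrite Hc, lincomb_upd. reflexivity.
    + exists n, b. split; [simpl; lia|]. split; [exact Hind|].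
      intros g; split.
      * intros Vg. apply Hspan. split; [exact Vg|].
        apply NNPP. intros gt. apply Hno. exists g. split; assumption.
      * intros Hc. apply Hspan in Hc. apply Hc.
Qed.

Definition homsol {X : Type} (A : pairset X) (k : X -> R) : Prop :=
  forall x y, A x y -> k x + k y = 0.

Lemma homsol_subspace {X : Type} (A : pairset X) : is_subspace (homsol A).
Proof.
  split; [|split].
  - intros x y _. ring.
  - intros g k Hg Hk x y Axy. specialize (Hg x y Axy). specialize (Hk x y Axy). lra.
  - intros a g Hg x y Axy. rewrite <- Rmult_plus_distr_l, (Hg x y Axy). ring.
Qed.

Lemma homsol_sub_solset {X : Type} d (A : pairset X) g0 g :
  solset d A g0 -> solset d A g -> homsol A (fun x => g x - g0 x).
Proof. intros S0 S x y Axy. specialize (S0 x y Axy). specialize (S x y Axy). lra. Qed.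

Lemma rk_eq_of_homsol_basis {X : Type} d (A : pairset X) g0 n b :
  solset d A g0 -> lin_independent n b -> spans n b (homsol A) -> rk_eq d A n.
Proof.
  intros S0 Hind Hspan. exists g0, b. split; [exact Hind|]. intros g. split.
  - intros S. destruct (proj1 (Hspan _) (homsol_sub_solset d A g0 g S0 S)) as [c Hc].
    exists c. intros x. specialize (Hc x). simpl in Hc. lra.
  - intros [c Hc] x y Axy.
    assert (K : homsol A (fun x => g x - g0 x)) by (apply Hspan; exists c; intros z; rewrite Hc; ring).
    specialize (K x y Axy). specialize (S0 x y Axy). simpl in K. lra.
Qed.

Lemma rk_eq_1_line {X : Type} d (A : pairset X) : rk_eq d A 1 ->
  exists b, homsol A b /\ (exists z, b z <> 0) /\
    forall k, homsol A k -> exists mu, forall x, k x = mu * b x.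
Proof.
  intros (g0 & b & Hind & Hsol). exists (b 0%nat). split; [|split].
  - assert (S0 : solset d A g0) by (apply Hsol; exists (fun _ => 0); intros x; simpl; ring).
    assert (S1 : solset d A (fun x => g0 x + b 0%nat x))
      by (apply Hsol; exists (fun _ => 1); intros x; simpl; ring).
    intros x y Axy. pose proof (homsol_sub_solset d A g0 _ S0 S1 x y Axy). simpl in H. lra.
  - apply NNPP. intros Hzero.
    enough (1 = 0) by lra.
    apply (Hind (fun _ => 1)) with (i := 0%nat); [|lia]. intros x. simpl.
    destruct (Req_dec (b 0%nat x) 0) as [E|E]; [rewrite E; ring|].
    exfalso. apply Hzero. exists x. exact E.
  - intros k Hk.
    destruct (proj1 (Hsol (fun x => g0 x + k x))) as [c Hc].
    { assert (S0 : solset d A g0) by (apply Hsol; exists (fun _ => 0); intros x; simpl; ring).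
      intros x y Axy. specialize (Hk x y Axy). specialize (S0 x y Axy). lra. }
    exists (c 0%nat). intros x. specialize (Hc x). simpl in Hc. lra.
Qed.

Definition classicb (P : Prop) : bool := if excluded_middle_informative P then true else false.

Lemma classicbP (P : Prop) : reflect P (classicb P).
Proof. unfold classicb. destruct (excluded_middle_informative P); constructor; assumption. Qed.

Lemma filter_length_le_sub {A : Type} (p q : A -> bool) l :
  (forall x, q x = true -> p x = true) -> (length (filter q l) <= length (filter p l))%nat.
Proof.
  intros Hqp. induction l as [|a l IH]; simpl; [lia|].
  destruct (q a) eqn:Eq; [rewrite (Hqp a Eq) | destruct (p a)]; simpl; lia.
Qed.

Lemma filter_length_lt_sub {A : Type} (p q : A -> bool) l :
  (forall x, q x = true -> p x = true) -> (exists x, In x l /\ p x = true /\ q x = false) ->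
  (length (filter q l) < length (filter p l))%nat.
Proof.
  intros Hqp. induction l as [|a l IH]; intros (x & Hx & Hp & Hq); [destruct Hx|].
  simpl. destruct Hx as [<-|Hx].
  - rewrite Hp, Hq. simpl. pose proof (filter_length_le_sub p q l Hqp). lia.
  - specialize (IH (ex_intro _ x (conj Hx (conj Hp Hq)))).
    destruct (q a) eqn:Eq; [rewrite (Hqp a Eq) | destruct (p a)]; simpl; lia.
Qed.

Lemma list_choice {A B : Type} (P : A -> B -> Prop) (l : list A) :
  (forall a, In a l -> exists b, P a b) ->
  exists lb, length lb = length l /\ forall a, In a l -> exists b, In b lb /\ P a b.
Proof.
  induction l as [|a l IH]; intros Hex.
  - exists nil. split; [reflexivity | intros a []].
  - destruct (Hex a (or_introl eq_refl)) as [b Pab].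
    destruct IH as (lb & Hlen & Hlb); [intros a' Ha'; apply Hex; right; exact Ha'|].
    exists (b :: lb). split; [simpl; lia|].
    intros a' [<-|Ha']; [exists b; split; [left|]; auto|].
    destruct (Hlb a' Ha') as (b' & Hb' & Pb'). exists b'. split; [right|]; assumption.
Qed.

Section Domination.

Variables (T : Type) (adj : T -> T -> Prop) (l : list T).
Hypothesis adj_sym : forall S U, adj S U -> adj U S.
Hypothesis adj_total : forall S, In S l -> exists U, In U l /\ adj S U.

Definition dominating (D : T -> bool) : Prop :=
  forall S, In S l -> D S = true \/ adj S S \/ exists U, In U l /\ D U = true /\ adj S U.

(* If the complement of [D] fails to dominate, some loop-free [S] in [D] has all
   its neighbours in [D], and [D] minus [S] still dominates. *)
Lemma dominating_complement_or_shrink D : dominating D ->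
  dominating (fun S => negb (D S)) \/
  exists D', dominating D' /\ (length (filter D' l) < length (filter D l))%nat.
Proof.
  intros HD.
  destruct (classic (exists S, In S l /\ D S = true /\ ~ adj S S /\
                       forall U, In U l -> adj S U -> D U = true))
    as [(S & HS & DS & noloop & nbrs)|Hno].
  - right. exists (fun U => (D U && negb (classicb (U = S)))%bool). split.
    + intros U HU. destruct (classicbP (U = S)) as [->|US].
      * right; right. destruct (adj_total S HS) as (W & HW & aSW).
        exists W. split; [exact HW|]. split; [|exact aSW].
        rewrite (nbrs W HW aSW). destruct (classicbP (W = S)) as [->|_]; [contradiction|reflexivity].
      * destruct (HD U HU) as [DU|[loop|(W & HW & DW & aUW)]].
        -- left. rewrite DU. reflexivity.
        -- right; left; exact loop.
        -- destruct (classic (W = S)) as [->|WS].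
           ++ left. rewrite (nbrs U HU (adj_sym _ _ aUW)). reflexivity.
           ++ right; right. exists W. split; [exact HW|]. split; [|exact aUW].
              rewrite DW. destruct (classicbP (W = S)); [contradiction|reflexivity].
    + apply filter_length_lt_sub.
      * intros U HU. apply andb_true_iff in HU. apply HU.
      * exists S. rewrite DS. destruct (classicbP (S = S)); [auto|contradiction].
  - left. intros S HS. destruct (D S) eqn:DS; [right|left; reflexivity].
    destruct (classic (adj S S)) as [loop|noloop]; [left; exact loop|right].
    apply NNPP. intros Hnot. apply Hno. exists S. repeat split; auto.
    intros U HU aSU. destruct (D U) eqn:DU; [reflexivity|].
    exfalso. apply Hnot. exists U. rewrite DU. auto.
Qed.

(* Ore's bound: a minimal dominating set and its complement both dominate. *)
Lemma small_dominating_set :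
  exists D, dominating D /\ (2 * length (filter D l) <= length l)%nat.
Proof.
  enough (H : forall n D, dominating D -> length (filter D l) = n ->
            exists D, dominating D /\ (2 * length (filter D l) <= length l)%nat)
    by (apply (H _ (fun _ => true) (fun S _ => or_introl eq_refl) eq_refl)).
  intros n. induction n as [n IH] using lt_wf_ind. intros D HD <-.
  destruct (dominating_complement_or_shrink D HD) as [Hc|(D' & HD' & Hlt)].
  - pose proof (filter_length D l).
    destruct (le_lt_dec (length (filter D l)) (length (filter (fun S => negb (D S)) l))).
    + exists D. split; [exact HD | lia].
    + exists (fun S => negb (D S)). split; [exact Hc | lia].
  - exact (IH _ Hlt D' HD' eq_refl).
Qed.

End Domination.

Lemma homsol_level_cut {X : Type} (A : pairset X) k s : homsol A k ->
  homsol A (fun x => if Req_EM_T (Rabs (k x)) s then k x else 0).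
Proof.
  intros Hk x y Axy. specialize (Hk x y Axy).
  assert (Rabs (k y) = Rabs (k x)) by (replace (k y) with (- k x) by lra; apply Rabs_Ropp).
  destruct (Req_EM_T (Rabs (k x)) s), (Req_EM_T (Rabs (k y)) s); lra.
Qed.

Lemma sum_zero_iff_opposite_signs a b s : 0 < s ->
  (a = 0 \/ a = s \/ a = - s) -> (b = 0 \/ b = s \/ b = - s) ->
  (a + b = 0 <-> (a < 0 <-> 0 < b) /\ (0 < a <-> b < 0)).
Proof. intros Hs [-> | [-> | ->]] [-> | [-> | ->]]; split; intros; intuition lra. Qed.

Definition set_eq_dec {X : Type} (S T : X -> Prop) : {S = T} + {S <> T} :=
  excluded_middle_informative (S = T).

Definition neg_partner {X : Type} d (v : X) (N : X -> Prop) (x : X) : Prop :=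
  exists y, N y /\ Aof d (d v) x y.

(* The candidate [A] with negative set [N], where [f - d_v] is negative exactly
   on [N], positive exactly on [neg_partner N] and zero elsewhere. *)
Definition sign_pairs {X : Type} d (v : X) (N : X -> Prop) : pairset X :=
  fun x y => Aof d (d v) x y /\ (N x <-> neg_partner d v N y) /\ (neg_partner d v N x <-> N y).

Section PinnedSolution.

Variables (X : Type) (d : X -> X -> R) (v : X) (f : X -> R).
Hypotheses (d_metric : is_metric d) (f_Delta : in_Delta d f)
  (f_cover : forall x, exists y, Aof d f x y)
  (f_sub : pair_subset (Aof d f) (Aof d (d v))).

Definition excess (x : X) : R := f x - d v x.

Lemma dist_refl x : d x x = 0.
Proof. apply (proj1 d_metric). reflexivity. Qed.

Lemma Aof_sym x y : Aof d f x y -> Aof d f y x.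
Proof. unfold Aof. rewrite (proj1 (proj2 d_metric) x y). lra. Qed.

Lemma Aof_iff x y : Aof d f x y <-> Aof d (d v) x y /\ excess x + excess y = 0.
Proof.
  unfold excess. split.
  - intros Axy. pose proof (f_sub x y Axy). unfold Aof in *. split; lra.
  - unfold Aof. lra.
Qed.

Lemma excess_v_nonneg : 0 <= excess v.
Proof. unfold excess. pose proof (f_Delta v v). rewrite dist_refl in *. lra. Qed.

(* A partner [y] of [x] in [A(f)] lies in [C(x,v)], hence in [C(x',v)], so
   [d x' y = d x' v + d v y <= f x' + f y]. *)
Lemma excess_le_Cset x x' : Cset d x v = Cset d x' v -> excess x <= excess x'.
Proof.
  intros Hxx'. destruct (f_cover x) as [y Axy].
  assert (Cy : Cset d x' v y).
  { rewrite <- Hxx'. pose proof (f_sub x y Axy). unfold Cset, interval, Aof in *.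
    rewrite (proj1 (proj2 d_metric) x v). lra. }
  unfold Cset, interval in Cy. rewrite (proj1 (proj2 d_metric) x' v) in Cy.
  pose proof (f_Delta x' y). apply Aof_iff in Axy as [_ Exy]. unfold excess in *. lra.
Qed.

Lemma excess_Cset x x' : Cset d x v = Cset d x' v -> excess x = excess x'.
Proof.
  intros Hxx'. apply Rle_antisym; apply excess_le_Cset; [exact Hxx' | symmetry; exact Hxx'].
Qed.

Lemma Aof_Cset x x' y : Aof d f x y -> Cset d x v = Cset d x' v -> Aof d f x' y.
Proof.
  intros Axy Hxx'. pose proof (excess_Cset x x' Hxx') as Ex.
  apply Aof_iff in Axy as [Gxy Exy]. apply Aof_iff. split; [|lra].
  assert (Cy : Cset d x' v y).
  { rewrite <- Hxx'. unfold Cset, interval, Aof in *. rewrite (proj1 (proj2 d_metric) x v). lra. }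
  unfold Cset, interval, Aof in *. rewrite (proj1 (proj2 d_metric) x' v) in Cy. lra.
Qed.

Lemma homsol_Cset k x x' : homsol (Aof d f) k -> Cset d x v = Cset d x' v -> k x = k x'.
Proof.
  intros Hk Hxx'. destruct (f_cover x) as [y Axy].
  pose proof (Hk x y Axy). pose proof (Hk x' y (Aof_Cset x x' y Axy Hxx')). lra.
Qed.

Definition linked (S U : X -> Prop) : Prop :=
  exists x y, S = Cset d x v /\ U = Cset d y v /\ Aof d f x y.

Lemma linked_sym S U : linked S U -> linked U S.
Proof. intros (x & y & HS & HU & Axy). exists y, x. auto using Aof_sym. Qed.

Lemma linked_Aof S U x y : linked S U -> S = Cset d x v -> U = Cset d y v -> Aof d f x y.
Proof.
  intros (x0 & y0 & -> & -> & A0) Hx Hy.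
  apply Aof_sym, (Aof_Cset y0 y x); [|exact Hy].
  apply Aof_sym, (Aof_Cset x0 x y0); assumption.
Qed.

(* Homogeneous solutions vanish on self-linked classes, so they are determined by
   their values on representatives of a dominating set of classes. *)
Lemma rk_Aof_le_half (l : list (X -> Prop)) :
  (forall S, In S l <-> exists x, S = Cset d x v) ->
  exists n, rk_eq d (Aof d f) n /\ (2 * n <= length l)%nat.
Proof.
  intros Hl.
  destruct (small_dominating_set _ linked l linked_sym) as (D & HD & Hsize).
  { intros S HS. apply Hl in HS as [x ->]. destruct (f_cover x) as [y Axy].
    exists (Cset d y v). split; [apply Hl; eauto | exists x, y; auto]. }
  destruct (list_choice (fun S t => S = Cset d t v) (filter D l)) as (ts & Hlen & Hts).
  { intros S HS. apply filter_In in HS as [HS _]. apply Hl in HS as [x ->]. eauto. }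
  destruct (subspace_basis ts (homsol (Aof d f)) (homsol_subspace _)) as (n & b & Hn & Hind & Hspan).
  { intros k Hk Hzero.
    assert (Dzero : forall y, In (Cset d y v) l -> D (Cset d y v) = true -> k y = 0).
    { intros y Hy Dy. destruct (Hts (Cset d y v)) as (t & Ht & Et); [apply filter_In; auto|].
      rewrite (homsol_Cset k y t Hk Et). apply Hzero, Ht. }
    intros x. assert (Hx : In (Cset d x v) l) by (apply Hl; eauto).
    destruct (HD _ Hx) as [Dx|[loop|(U & HU & DU & link)]].
    - apply Dzero; assumption.
    - pose proof (Hk x x (linked_Aof _ _ x x loop eq_refl eq_refl)). lra.
    - pose proof HU as HU'. apply Hl in HU' as [y ->].
      pose proof (Hk x y (linked_Aof _ _ x y link eq_refl eq_refl)).
      pose proof (Dzero y HU DU). lra. }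
  exists n. split.
  - apply (rk_eq_of_homsol_basis d _ f n b); [intros x y Axy; exact Axy | exact Hind | exact Hspan].
  - lia.
Qed.

Lemma excess_homsol : homsol (Aof d f) excess.
Proof. intros x y Axy. apply Aof_iff in Axy. apply Axy. Qed.

Lemma excess_pos_iff x : 0 < excess x <-> neg_partner d v (fun y => excess y < 0) x.
Proof.
  split.
  - intros Hx. destruct (f_cover x) as [y Axy]. apply Aof_iff in Axy as [Gxy Exy].
    exists y. split; [lra | exact Gxy].
  - intros (y & Hy & Gxy). pose proof (f_Delta x y). unfold Aof, excess in *. lra.
Qed.

(* If [f = d_v] then [A(f)] contains every pair [{x,v}], which forces every
   homogeneous solution to vanish. *)
Lemma excess_nonzero_of_rk1 : rk_eq d (Aof d f) 1 -> exists z, excess z <> 0.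
Proof.
  intros R1. destruct (rk_eq_1_line d _ R1) as (b & Hb & (z & bz) & _).
  apply NNPP. intros Hzero. apply bz.
  assert (E : forall x, excess x = 0)
    by (intros x; apply NNPP; intros Ex; apply Hzero; exists x; exact Ex).
  assert (Axv : forall x, Aof d f x v).
  { intros x. apply Aof_iff. rewrite !E. split; [|ring].
    unfold Aof. rewrite dist_refl, (proj1 (proj2 d_metric) x v). ring. }
  pose proof (Hb v v (Axv v)). pose proof (Hb z v (Axv z)). lra.
Qed.

Lemma excess_neg_of_rk1 : rk_eq d (Aof d f) 1 -> exists q, excess q < 0.
Proof.
  intros R1. destruct (excess_nonzero_of_rk1 R1) as [z Ez].
  destruct (Rlt_or_le (excess z) 0) as [Hneg|Hpos]; [exists z; exact Hneg|].
  destruct (proj1 (excess_pos_iff z) ltac:(lra)) as (q & Hq & _). exists q. exact Hq.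
Qed.

(* The level cut of [f - d_v] at a nonzero value is again homogeneous, hence
   proportional to [f - d_v]; comparing the two at that point shows they agree. *)
Lemma excess_three_valued : rk_eq d (Aof d f) 1 ->
  exists s, 0 < s /\ forall x, excess x = 0 \/ excess x = s \/ excess x = - s.
Proof.
  intros R1. destruct (excess_nonzero_of_rk1 R1) as [z Ez].
  destruct (rk_eq_1_line d _ R1) as (b & _ & _ & Hline).
  set (s := Rabs (excess z)).
  set (cut := fun x => if Req_EM_T (Rabs (excess x)) s then excess x else 0).
  destruct (Hline _ excess_homsol) as [mu0 Hmu0].
  destruct (Hline cut (homsol_level_cut _ _ s excess_homsol)) as [mu Hmu].
  assert (cutz : cut z = excess z)
    by (unfold cut; destruct (Req_EM_T (Rabs (excess z)) s); [reflexivity | contradiction]).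
  assert (cut_excess : forall x, cut x = excess x).
  { intros x. apply (Rmult_eq_reg_r (excess z)); [|exact Ez].
    rewrite <- cutz at 2. rewrite (Hmu x), (Hmu z), (Hmu0 x), (Hmu0 z). ring. }
  exists s. split; [apply Rabs_pos_lt, Ez|]. intros x.
  specialize (cut_excess x). unfold cut in cut_excess.
  destruct (Req_EM_T (Rabs (excess x)) s) as [Ea|_]; [right|left; lra].
  destruct (Rle_or_lt 0 (excess x)).
  - left. rewrite Rabs_right in Ea; lra.
  - right. rewrite Rabs_left in Ea; lra.
Qed.

Lemma Aof_eq_sign_pairs (N : X -> Prop) : rk_eq d (Aof d f) 1 ->
  (forall x, N x <-> excess x < 0) -> Aof d f = sign_pairs d v N.
Proof.
  intros R1 HN. destruct (excess_three_valued R1) as (s & Hs & Hval).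
  assert (HP : forall x, neg_partner d v N x <-> 0 < excess x).
  { intros x. rewrite excess_pos_iff. unfold neg_partner.
    split; intros (y & Hy & Gxy); exists y; split; try apply HN; assumption. }
  apply functional_extensionality; intros x. apply functional_extensionality; intros y.
  apply propositional_extensionality. unfold sign_pairs.
  rewrite Aof_iff, (sum_zero_iff_opposite_signs _ _ s Hs (Hval x) (Hval y)), !HP, !HN.
  reflexivity.
Qed.

Definition negative_classes (l : list (X -> Prop)) : list (X -> Prop) :=
  filter (fun S => classicb (exists x, S = Cset d x v /\ excess x < 0)) l.

Lemma In_negative_classes (l : list (X -> Prop)) x :
  (forall S, In S l <-> exists x, S = Cset d x v) ->
  In (Cset d x v) (negative_classes (remove set_eq_dec (Cset d v v) l)) <-> excess x < 0.
Proof.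
  intros Hl. unfold negative_classes. rewrite filter_In. split.
  - intros [_ Hneg]. destruct (classicbP (exists x', Cset d x v = Cset d x' v /\ excess x' < 0))
      as [(x' & Hxx' & Hx')|]; [|discriminate].
    rewrite (excess_Cset x x' Hxx'). exact Hx'.
  - intros Hx. split.
    + apply in_in_remove; [|apply Hl; eauto].
      intros Hxv. pose proof (excess_Cset x v Hxv). pose proof excess_v_nonneg. lra.
    + destruct (classicbP (exists x', Cset d x v = Cset d x' v /\ excess x' < 0))
        as [|Hno]; [reflexivity|]. exfalso. apply Hno. eauto.
Qed.

End PinnedSolution.

Fixpoint sublists {A : Type} (l : list A) : list (list A) :=
  match l with
  | nil => nil :: nil
  | a :: l => map (cons a) (sublists l) ++ sublists l
  end.

Fixpoint nonempty_sublists {A : Type} (l : list A) : list (list A) :=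
  match l with
  | nil => nil
  | a :: l => map (cons a) (sublists l) ++ nonempty_sublists l
  end.

Lemma sublists_length {A : Type} (l : list A) : length (sublists l) = (2 ^ length l)%nat.
Proof. induction l as [|a l IH]; simpl; [reflexivity|]. rewrite length_app, length_map, IH. lia. Qed.

Lemma nonempty_sublists_length {A : Type} (l : list A) :
  length (nonempty_sublists l) = (2 ^ length l - 1)%nat.
Proof.
  induction l as [|a l IH]; simpl; [reflexivity|].
  rewrite length_app, length_map, IH, sublists_length.
  pose proof (Nat.pow_le_mono_r 2 0 (length l) ltac:(lia) ltac:(lia)). simpl in *. lia.
Qed.

Lemma filter_In_sublists {A : Type} (p : A -> bool) l : In (filter p l) (sublists l).
Proof.
  induction l as [|a l IH]; simpl; [left; reflexivity|].
  destruct (p a); apply in_or_app; [left; apply in_map|right]; exact IH.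
Qed.

Lemma filter_In_nonempty_sublists {A : Type} (p : A -> bool) l :
  (exists x, In x (filter p l)) -> In (filter p l) (nonempty_sublists l).
Proof.
  induction l as [|a l IH]; intros [x Hx]; [destruct Hx|]. simpl.
  destruct (p a) eqn:Ea; apply in_or_app.
  - left. apply in_map, filter_In_sublists.
  - right. apply IH. simpl in Hx. rewrite Ea in Hx. exists x. exact Hx.
Qed.

Theorem proposition5p6 (X : Type) (d : X -> X -> R) (v : X) (m : nat) :
  is_metric d ->
  scriptC_card d v m ->
  (forall A : pairset X, in_scriptA d A -> pair_subset A (Aof d (d v)) ->
     exists n : nat, rk_eq d A n /\ (2 * n <= m)%nat) /\
  (exists s : list (pairset X),
     (forall A : pairset X, in_scriptA d A -> pair_subset A (Aof d (d v)) ->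
        rk_eq d A 1 -> In A s) /\
     (length s <= 2 ^ (m - 1) - 1)%nat).
Proof.
  intros Hd (l & _ & <- & Hl). split.
  - intros A (f & HD & -> & Hcov) Hsub. exact (rk_Aof_le_half X d v f Hd HD Hcov Hsub l Hl).
  - set (l' := remove set_eq_dec (Cset d v v) l).
    exists (map (fun L => sign_pairs d v (fun x => In (Cset d x v) L)) (nonempty_sublists l')).
    split.
    + intros A (f & HD & -> & Hcov) Hsub R1.
      pose proof (In_negative_classes X d v f Hd HD Hcov Hsub l) as Hneg.
      apply in_map_iff. exists (negative_classes X d v f l'). split.
      * symmetry. apply Aof_eq_sign_pairs; try assumption. intros x. apply Hneg, Hl.
      * apply filter_In_nonempty_sublists.
        destruct (excess_neg_of_rk1 X d v f Hd HD Hcov Hsub R1) as [q Hq].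
        exists (Cset d q v). apply Hneg; assumption.
    + rewrite length_map, nonempty_sublists_length.
      assert (Hlt : (length l' < length l)%nat) by (apply remove_length_lt, Hl; eauto).
      pose proof (Nat.pow_le_mono_r 2 (length l') (length l - 1) ltac:(lia) ltac:(lia)). lia.
Qed.
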